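(* Let $n\ge3$ be an even integer. Then the number of edges of $OD(\mathcal{D}_n)$ is $$|E(OD(\mathcal{D}_n))|=\frac12\Big(2n-1+(n+1)\sum_{\lambda\mid\frac n2}\phi(2\lambda)+\sum_{\substack{m\mid n,\ m>1\\ m\text{ odd}}}\Big(m-2\phi(m)+\sum_{\lambda\mid\frac nm}\phi(\lambda m)\Big)\phi(m)+\sum_{\substack{m\mid n,\ m>2\\ m\text{ even}}}\Big(n+m-2\phi(m)+\sum_{\lambda\mid\frac nm}\phi(\lambda m)\Big)\phi(m)\Big),$$ where $\phi$ is Euler's totient function.
   Context: The dihedral group $\mathcal{D}_n$ ($n\ge3$) is the group $\langle a,b\mid a^n=b^2=(ab)^2=e\rangle$ of order $2n$. For a finite group $G$, $o(x)$ denotes the order of $x\in G$. The order-divisor graph $OD(G)$ is the simple undirected graph with vertex set $G$, in which two distinct vertices $x,y$ are adjacent if and only if $o(x)\neq o(y)$ and either $o(x)\mid o(y)$ or $o(y)\mid o(x)$. *)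

From HB Require Import structures.
From mathcomp Require Import all_boot all_fingroup all_solvable.
Set Implicit Arguments. Unset Strict Implicit. Unset Printing Implicit Defensive.

(* Adjacency of the order-divisor graph OD(G): o(x) <> o(y) and
   o(x) | o(y) or o(y) | o(x).  (Different orders force x <> y.) *)
Definition od_adj (gT : finGroupType) (x y : gT) : bool :=
  (#[x]%g != #[y]%g) && ((#[x]%g %| #[y]%g) || (#[y]%g %| #[x]%g)).

Definition od_edges (gT : finGroupType) : {set {set gT}} :=
  [set [set p.1; p.2] | p in [set p : gT * gT | od_adj p.1 p.2]].

From HB Require Import structures.
From mathcomp Require Import all_boot all_order all_algebra all_fingroup all_solvable.
From mathcomp Require Import zify.
Import GRing.Theory.
Set Implicit Arguments. Unset Strict Implicit. Unset Printing Implicit Defensive.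

(* Every edge of OD(G) is counted twice by the ordered pairs of adjacent
   vertices, and adjacency only depends on the orders of the two vertices, so
   2|E| = sum_d N(d) deg(d), where N(d) is the number of elements of order d
   and deg(d) is the sum of N(e) over the e <> d with d | e or e | d.  In D_n
   the rotations form a cyclic group of order n and the n reflections have
   order 2, so N(d) = [d | n] phi(d) + [d = 2] n.  Summing N over the divisors
   and over the multiples of d, which counts e = d twice, gives
   deg(d) + 2 N(d) = d + [2 | d] n + sum_(l | n/d) phi(l d) + [d | 2] n;
   the four terms of the formula are the contributions of d = 1, d = 2, the
   odd d > 1 and the even d > 2. *)

Definition od_rel (d e : nat) : bool := (d != e) && ((d %| e) || (e %| d)).

Lemma od_relC d e : od_rel d e = od_rel e d.
Proof. by rewrite /od_rel eq_sym orbC. Qed.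

Lemma od_rel_dvd d e : od_rel d e + 2 * (e == d) = (e %| d) + (d %| e).
Proof.
rewrite /od_rel; case: (eqVneq e d) => [->|ne] /=; first by rewrite dvdnn.
rewrite muln0 addn0.
case de: (d %| e); case ed: (e %| d) => //=.
by move: ne; rewrite eqn_dvd ed de.
Qed.

Section OrderDivisorGraph.
Variable gT : finGroupType.

Definition norder (d : nat) : nat := #|[set z : gT | #[z]%g == d]|.

Lemma od_adj_neq (a b : gT) : od_adj a b -> a != b.
Proof. by case/andP=> ne _; apply: contra ne => /eqP ->. Qed.

Lemma card_od_adj_pairs :
  #|[set p : gT * gT | od_adj p.1 p.2]| = 2 * #|od_edges gT|.
Proof.
set P := [set p : gT * gT | od_adj p.1 p.2].
rewrite -sum1_card (partition_big_imset (fun p : gT * gT => [set p.1; p.2])) /=.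
rewrite -/(od_edges gT) mulnC -sum_nat_const.
apply: eq_bigr => _ /imsetP[[a b] /[!inE] /= ab ->].
have fibre : [set p in P | [set p.1; p.2] == [set a; b]] = [set (a, b); (b, a)].
  apply/setP => -[c d]; rewrite !inE /= !xpair_eqE; apply/andP/idP => [[cd /eqP E]|].
    have /set2P c_ab : c \in [set a; b] by rewrite -E set21.
    have /set2P d_ab : d \in [set a; b] by rewrite -E set22.
    have := od_adj_neq cd.
    by case: c_ab d_ab => -> [] ->; rewrite ?eqxx ?orbT.
  case/orP => /andP[/eqP -> /eqP ->]; split => //; last by rewrite setUC.
  by rewrite /od_adj -/(od_rel _ _) od_relC.
rewrite sum1dep_card fibre cards2 xpair_eqE.
by have /negPf -> := od_adj_neq ab.
Qed.

Lemma sum_by_order (F : nat -> nat) :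
  \sum_(a : gT) F #[a]%g = \sum_(d <- divisors #|gT|) norder d * F d.
Proof.
have order_divisors (a : gT) : #[a]%g \in divisors #|gT|.
  by rewrite -cardsT -dvdn_divisors ?cardG_gt0 // order_dvdG ?inE.
transitivity (\sum_(a : gT) \sum_(d <- divisors #|gT| | #[a]%g == d) F d).
  apply: eq_bigr => a _; rewrite big_mkcond (bigD1_seq #[a]%g) ?divisors_uniq //=.
  by rewrite eqxx big1 ?addn0 // => d; rewrite eq_sym => /negbTE ->.
rewrite (exchange_big_dep xpredT) //=; apply: eq_bigr => d _.
by rewrite -sum_nat_const; apply: eq_bigl => a; rewrite inE.
Qed.

Lemma od_edges_double :
  2 * #|od_edges gT| =
  \sum_(d <- divisors #|gT|) norder d * \sum_(e <- divisors #|gT|) norder e * od_rel d e.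
Proof.
rewrite -card_od_adj_pairs -sum1dep_card.
rewrite -(pair_big_dep xpredT (fun a b => od_adj a b) (fun _ _ => 1)) /=.
rewrite -sum_by_order; apply: eq_bigr => a _.
rewrite -sum_by_order big_mkcond /=; apply: eq_bigr => b _.
by rewrite /od_adj -/(od_rel _ _); case: od_rel.
Qed.

End OrderDivisorGraph.

Section ElementOrders.
Local Open Scope group_scope.
Variable gT : finGroupType.

Lemma card_cycle_order (x : gT) d :
  #|[set z in <[x]> | #[z] == d]| = ((d %| #[x]) * totient d)%N.
Proof.
have [dx | ndx] := boolP (d %| #[x]); last first.
  rewrite mul0n; apply/eqP; rewrite cards_eq0; apply/eqP/setP => z; rewrite !inE.
  by apply: contraNF ndx => /andP[/order_dvdG zx /eqP <-].
set w := x ^+ (#[x] %/ d).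
have d_gt0 : 0 < d := dvdn_gt0 (order_gt0 x) dx.
have ow : #[w] = d by rewrite orderXdiv ?dvdn_div // divnA // mulKn.
rewrite mul1n -{2}ow totient_gen; apply: eq_card => z; rewrite !inE /generator.
apply/andP/eqP => [[zx /eqP zd] | wz].
  apply/eqP; rewrite (eq_subG_cyclic (cycle_cyclic x)) ?cycle_subG ?mem_cycle //.
  by rewrite -!orderE ow zd.
have zw : z \in <[w]> by rewrite wz cycle_id.
split; last by rewrite orderE -wz -orderE ow.
by rewrite (subsetP _ _ zw) // cycle_subG mem_cycle.
Qed.

Lemma order_involution (z : gT) : z ^+ 2 = 1 -> z != 1 -> #[z] = 2.
Proof.
move=> z2 nz1; have : #[z] %| 2 by rewrite order_dvdn z2.
have : #[z] != 1%N by rewrite order_eq1.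
by case: #[z] (order_gt0 z) => [|[|[|k]]].
Qed.

End ElementOrders.

Section DihedralPresentation.
Local Open Scope group_scope.
Variables (gT : finGroupType) (q : nat) (x y : gT).
Hypotheses (q_gt0 : 0 < q) (defG : <[x]> <*> <[y]> = [set: gT])
  (cardG : #|[set: gT]| = q.*2) (xq : x ^+ q = 1) (y2 : y ^+ 2 = 1)
  (xy : x ^ y = x^-1).

Lemma dihedral_mulg : <[x]> * <[y]> = [set: gT].
Proof.
have nxy : <[y]> \subset 'N(<[x]>).
  by rewrite cycle_subG; apply/normP; rewrite -cycleJ xy cycleV.
by rewrite -(norm_joinEr nxy).
Qed.

Lemma order_dihedral_rotation : #[x] = q.
Proof.
have ox_le : #[x] <= q by rewrite dvdn_leq // order_dvdn xq.
have oy_le : #[y] <= 2 by rewrite dvdn_leq // order_dvdn y2.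
have := mul_cardG <[x]> <[y]>; rewrite dihedral_mulg cardG -!orderE.
have := cardG_gt0 (<[x]> :&: <[y]>)%G; move: #|_| => i i_gt0 cardE.
apply/eqP; rewrite eqn_leq ox_le -(leq_pmul2r (isT : 0 < 2)) muln2.
rewrite -[q.*2]muln1 (leq_trans (leq_mul (leqnn _) i_gt0)) //.
by rewrite -cardE leq_mul2l oy_le orbT.
Qed.

Lemma dihedral_reflection_notin : y \notin <[x]>.
Proof.
apply/negP; rewrite -cycle_subG => /mulGSid yx.
have := cardG; rewrite -dihedral_mulg yx -orderE order_dihedral_rotation -addnn.
by move: q_gt0; lia.
Qed.

Lemma order_dihedral_reflection : #[y] = 2.
Proof.
by apply: order_involution y2 _; apply: contraNneq dihedral_reflection_notin => ->.
Qed.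

Lemma order_dihedral_notin z : z \notin <[x]> -> #[z] = 2.
Proof.
have : z \in <[x]> * <[y]> by rewrite dihedral_mulg inE.
case/mulsgP => u v /cycleP[i ->]; rewrite cycle2g ?order_dihedral_reflection //.
case/set2P=> -> -> {z v}; first by rewrite mulg1 mem_cycle.
move=> xiy_notin; apply: order_involution; last first.
  by apply: contraNneq xiy_notin => ->; apply: group1.
have yxy : y * x ^+ i * y = x ^- i.
  by rewrite -{1}(invg2id order_dihedral_reflection) -mulgA -conjgE conjXg xy expVgn.
by rewrite expgS expg1 -!mulgA (mulgA y) yxy mulgV.
Qed.

Lemma norder_dihedral d : norder gT d = ((d %| q) * totient d + (d == 2) * q)%N.
Proof.
rewrite /norder -(cardsID <[x]>); congr (_ + _)%N.
  rewrite -order_dihedral_rotation -card_cycle_order.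
  by apply: eq_card => z; rewrite !inE andbC.
have -> : [set z | #[z] == d] :\: <[x]> = if d == 2 then ~: <[x]> else set0.
  apply/setP => z; rewrite !inE; have [zx | zx] /= := boolP (z \in <[x]>).
    by case: ifP; rewrite ?inE ?zx.
  by rewrite order_dihedral_notin // eq_sym; case: (d == 2); rewrite ?inE ?zx.
case: (d == 2); last by rewrite cards0.
have := cardsC <[x]>; rewrite -cardsT cardG -orderE order_dihedral_rotation.
by rewrite mul1n -addnn => /addnI.
Qed.

End DihedralPresentation.

Section DivisorSums.
Variables (R : Type) (idx : R) (op : Monoid.com_law idx).

Lemma big_pred1_seq (I : eqType) (r : seq I) i (F : I -> R) :
  uniq r -> i \in r -> \big[op/idx]_(j <- r | j == i) F j = F i.
Proof. by move=> r_uniq ri; rewrite -big_filter filter_pred1_uniq // big_seq1. Qed.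

Lemma big_divisors_ord k (F : nat -> R) : 0 < k ->
  \big[op/idx]_(e <- divisors k) F e = \big[op/idx]_(e < k.+1 | e %| k) F e.
Proof.
move=> k_gt0; rewrite -(big_mkord (fun e => e %| k)) -[RHS]big_filter.
apply: perm_big; apply: uniq_perm.
- exact: divisors_uniq.
- by rewrite filter_uniq ?iota_uniq.
move=> e; rewrite mem_filter mem_iota -dvdn_divisors //= add0n subn0 ltnS.
by case: (boolP (e %| k)) => //= /dvdn_leq->.
Qed.

Lemma big_divisors_dvd n d (F : nat -> R) : 0 < n -> d %| n ->
  \big[op/idx]_(e <- divisors n | e %| d) F e = \big[op/idx]_(e <- divisors d) F e.
Proof.
move=> n_gt0 dn; have d_gt0 := dvdn_gt0 n_gt0 dn.
rewrite -[LHS]big_filter; apply: perm_big; apply: uniq_perm.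
- by rewrite filter_uniq ?divisors_uniq.
- exact: divisors_uniq.
move=> e; rewrite mem_filter -!dvdn_divisors //.
by case: (boolP (e %| d)) => //= /dvdn_trans->.
Qed.

Lemma big_divisors_mul n d (F : nat -> R) : 0 < n -> d %| n ->
  \big[op/idx]_(e <- divisors n | d %| e) F e =
  \big[op/idx]_(l <- divisors (n %/ d)) F (l * d).
Proof.
move=> n_gt0 dn; have d_gt0 := dvdn_gt0 n_gt0 dn.
have nd_gt0 : 0 < n %/ d by rewrite divn_gt0 // dvdn_leq.
rewrite -[LHS]big_filter -(big_map (fun l => l * d) xpredT).
apply: perm_big; apply: uniq_perm.
- by rewrite filter_uniq ?divisors_uniq.
- by rewrite map_inj_uniq ?divisors_uniq // => a b /eqP; rewrite eqn_pmul2r // => /eqP.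
move=> e; rewrite mem_filter -dvdn_divisors //; apply/andP/mapP => [[de en] | [l]].
  exists (e %/ d); last by rewrite divnK.
  by rewrite -dvdn_divisors // dvdn_divRL // divnK.
by rewrite -dvdn_divisors // => ln ->; rewrite dvdn_mull // -dvdn_divRL.
Qed.

End DivisorSums.

Lemma sum_divisors_totient k : 0 < k -> \sum_(e <- divisors k) totient e = k.
Proof. by move=> k_gt0; rewrite big_divisors_ord // sum_totient_dvd. Qed.

Definition dihedral_norder n d := ((d %| n) * totient d + (d == 2) * n)%N.

Definition dihedral_degree n d := \sum_(e <- divisors n) dihedral_norder n e * od_rel d e.

Definition totient_multiples n d := \sum_(l <- divisors (n %/ d)) totient (l * d).

Section DihedralDegrees.
Variable n : nat.
Hypotheses (n_gt0 : 0 < n) (n_even : 2 %| n).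

Local Notation N := (dihedral_norder n).

Lemma sum_dihedral_norder_double (F : nat -> nat) :
  \sum_(d <- divisors n.*2) N d * F d = \sum_(d <- divisors n) N d * F d.
Proof.
have n2_gt0 : 0 < n.*2 by rewrite double_gt0.
have n_dvd_n2 : n %| n.*2 by rewrite -muln2 dvdn_mulr.
rewrite -(big_divisors_dvd _ _ n2_gt0 n_dvd_n2) [RHS]big_mkcond /=.
apply: eq_bigr => d _; case: (boolP (d %| n)) => // nd.
by rewrite /dihedral_norder (negbTE nd); case: eqP => // d2; rewrite d2 n_even in nd.
Qed.

Lemma sum_dihedral_norder (P : pred nat) :
  \sum_(e <- divisors n | P e) N e = \sum_(e <- divisors n | P e) totient e + P 2 * n.
Proof.
transitivity (\sum_(e <- divisors n | P e) (totient e + (e == 2) * n)).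
  rewrite big_seq_cond [RHS]big_seq_cond; apply: eq_bigr => e /andP[].
  by rewrite -dvdn_divisors // => en _; rewrite /dihedral_norder en mul1n.
rewrite big_split /= -big_distrl /=; congr (_ + _ * _).
rewrite big_mkcond (bigD1_seq 2) -?dvdn_divisors ?divisors_uniq //= big1 ?addn0.
  by case: (P 2).
by move=> e /negPf ->; case: (P e).
Qed.

Lemma sum_dihedral_norder_dvd d : d %| n ->
  \sum_(e <- divisors n | e %| d) N e = d + (2 %| d) * n.
Proof.
move=> dn; have d_gt0 := dvdn_gt0 n_gt0 dn.
by rewrite sum_dihedral_norder big_divisors_dvd // sum_divisors_totient.
Qed.

Lemma sum_dihedral_norder_mul d : d %| n ->
  \sum_(e <- divisors n | d %| e) N e = totient_multiples n d + (d %| 2) * n.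
Proof. by move=> dn; rewrite sum_dihedral_norder big_divisors_mul. Qed.

Lemma dihedral_degree_eq d : d \in divisors n ->
  dihedral_degree n d + 2 * N d =
  d + (2 %| d) * n + totient_multiples n d + (d %| 2) * n.
Proof.
move=> dD; have dn : d %| n by rewrite dvdn_divisors.
have N_d : \sum_(e <- divisors n) N e * (2 * (e == d)) = 2 * N d.
  rewrite (bigD1_seq d) ?divisors_uniq //= eqxx big1 ?addn0 1?mulnC //.
  by move=> e /negPf ->; rewrite muln0.
rewrite /dihedral_degree -N_d -big_split /=.
rewrite (eq_bigr (fun e => (if e %| d then N e else 0) + (if d %| e then N e else 0))).
  rewrite big_split /= -!big_mkcond.
  by rewrite sum_dihedral_norder_dvd // sum_dihedral_norder_mul // addnA.
move=> e _; rewrite -mulnDr od_rel_dvd mulnDr.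
by case: (e %| d); case: (d %| e); rewrite ?muln0 ?muln1.
Qed.

Lemma totient_multiples1 : totient_multiples n 1 = n.
Proof.
rewrite /totient_multiples divn1 -[RHS](sum_divisors_totient n_gt0).
by apply: eq_bigr => l _; rewrite muln1.
Qed.

Lemma dihedral_degree1 : dihedral_degree n 1 = 2 * n - 1.
Proof.
have := dihedral_degree_eq (divisor1 n).
by rewrite totient_multiples1 /dihedral_norder dvd1n (_ : totient 1 = 1) //=; lia.
Qed.

Lemma dihedral_degree2 : dihedral_degree n 2 = totient_multiples n 2.
Proof.
have := dihedral_degree_eq (_ : 2 \in divisors n); rewrite -dvdn_divisors //.
by rewrite /dihedral_norder n_even (_ : totient 2 = 1) //=; lia.
Qed.

Lemma dihedral_norder_gt2 d : d \in divisors n -> 2 < d -> N d = totient d.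
Proof.
rewrite -dvdn_divisors // /dihedral_norder => -> d_gt2.
by rewrite (_ : d == 2 = false) ?addn0 //; apply/eqP; lia.
Qed.

Lemma dihedral_degree_gt2 d : d \in divisors n -> 2 < d ->
  dihedral_degree n d + 2 * totient d = d + (2 %| d) * n + totient_multiples n d.
Proof.
move=> dD d_gt2; have := dihedral_degree_eq dD.
have d2 : d %| 2 = false by apply: contraTF d_gt2 => /(dvdn_leq (isT : 0 < 2)); lia.
by rewrite dihedral_norder_gt2 // d2 mul0n addn0.
Qed.

End DihedralDegrees.

Section DegreeSum.
Local Open Scope ring_scope.

Lemma sum_divisors_even_split (V : nmodType) n (h : nat -> V) :
  (0 < n)%N -> (2 %| n)%N ->
  \sum_(d <- divisors n) h d =
  h 1%N + h 2%N + \sum_(d <- divisors n | (1 < d)%N && odd d) h d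
  + \sum_(d <- divisors n | (2 < d)%N && ~~ odd d) h d.
Proof.
move=> n_gt0 n_even; have two_n : (2 \in divisors n)%N by rewrite -dvdn_divisors.
rewrite -(big_pred1_seq +%R h (divisors_uniq n) (divisor1 n)).
rewrite -(big_pred1_seq +%R h (divisors_uniq n) two_n).
rewrite (big_mkcond (fun d => d == 1%N)) (big_mkcond (fun d => d == 2%N)).
rewrite (big_mkcond (fun d => (1 < d)%N && odd d)).
rewrite (big_mkcond (fun d => (2 < d)%N && ~~ odd d)).
rewrite -!big_split /=; apply: eq_big_seq => d.
rewrite -dvdn_divisors // => /(dvdn_gt0 n_gt0).
case: d => [|[|[|d]]] //= _; rewrite ?addr0 ?add0r //.
by case: (odd d); rewrite /= ?addr0 ?add0r.
Qed.

Lemma dihedral_degree_sum n : (0 < n)%N -> (2 %| n)%N ->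
  (\sum_(d <- divisors n) dihedral_norder n d * dihedral_degree n d)%N%:Z =
   (2 * n)%N%:Z - 1
   + (n.+1)%:Z * (\sum_(l <- divisors (n %/ 2)) totient (2 * l))%N%:Z
   + \sum_(m <- divisors n | (1 < m)%N && odd m)
       (m%:Z - 2 * (totient m)%:Z + (totient_multiples n m)%:Z) * (totient m)%:Z
   + \sum_(m <- divisors n | (2 < m)%N && ~~ odd m)
       (n%:Z + m%:Z - 2 * (totient m)%:Z + (totient_multiples n m)%:Z)
       * (totient m)%:Z.
Proof.
move=> n_gt0 n_even.
rewrite (big_morph Posz PoszD (erefl _)) (sum_divisors_even_split _ n_gt0 n_even).
congr (_ + _ + _ + _).
- by rewrite dihedral_degree1 // /dihedral_norder dvd1n (_ : totient 1 = 1%N) //=; lia.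
- rewrite dihedral_degree2 // PoszM /totient_multiples; congr (Posz _ * Posz _).
    by rewrite /dihedral_norder n_even (_ : totient 2 = 1%N) //=; lia.
  by apply: eq_bigr => l _; rewrite mulnC.
- rewrite big_seq_cond [RHS]big_seq_cond; apply: eq_bigr => d /and3P[dD d_gt1 d_odd].
  have d_gt2 : (2 < d)%N by case: d d_gt1 d_odd {dD} => [|[|[]]].
  have := dihedral_degree_gt2 n_gt0 n_even dD d_gt2.
  rewrite dihedral_norder_gt2 // PoszM mulrC dvdn2 d_odd => degE; congr (_ * _); lia.
- rewrite big_seq_cond [RHS]big_seq_cond; apply: eq_bigr => d /and3P[dD d_gt2 d_even].
  have := dihedral_degree_gt2 n_gt0 n_even dD d_gt2.
  rewrite dihedral_norder_gt2 // PoszM mulrC dvdn2 d_even => degE; congr (_ * _); lia.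
Qed.

End DegreeSum.

Theorem mainTheorem20 (n : nat) :
  (3 <= n)%N -> ~~ odd n ->
  ((2 * #|od_edges (dihedral_gtype n.*2)|)%N%:Z =
   (2 * n)%N%:Z - 1
   + (n.+1)%:Z * (\sum_(l <- divisors (n %/ 2)) totient (2 * l))%N%:Z
   + \sum_(m <- divisors n | (1 < m)%N && odd m)
       (m%:Z - 2 * (totient m)%:Z
        + (\sum_(l <- divisors (n %/ m)) totient (l * m))%N%:Z) * (totient m)%:Z
   + \sum_(m <- divisors n | (2 < m)%N && ~~ odd m)
       (n%:Z + m%:Z - 2 * (totient m)%:Z
        + (\sum_(l <- divisors (n %/ m)) totient (l * m))%N%:Z) * (totient m)%:Z)%R.
Proof.
rewrite -dvdn2 => n_ge3 n_even; have n_gt1 : (1 < n)%N by lia.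
have n_gt0 := ltnW n_gt1.
set gT := dihedral_gtype n.*2.
have cardG : #|[set: gT]| = n.*2 by rewrite card_dihedral.
have := Grp_dihedral n_gt1 [set: gT]%G; rewrite homg_refl.
case/esym/existsP => -[x y] /eqP[defG xn y2 xy].
have norderE d : norder gT d = dihedral_norder n d :=
  norder_dihedral n_gt0 defG cardG xn y2 xy d.
rewrite -(dihedral_degree_sum n_gt0 n_even) od_edges_double -cardsT cardG.
rewrite -(sum_dihedral_norder_double n_gt0 n_even (dihedral_degree n)).
congr (Posz _); apply: eq_bigr => d _; rewrite norderE /dihedral_degree.
rewrite -(sum_dihedral_norder_double n_gt0 n_even (od_rel d)).
by congr (_ * _); apply: eq_bigr => e _; rewrite norderE.
Qed.
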